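(* Let $\hat{\mathcal D}$ be a $\tau$-geometric marked DAG over $X$ with $\tau\ge4$, $\kappa>0$, $q\in\mathcal Q_{\mathcal D}$, $c\in\mathbb R_+^X$, $p=\mathcal A(q,c)$, $Q=\Lambda(q)$, $P=\Lambda(p)$. Then $$\frac{\tau-3}{\kappa\tau}\sum_{uv\in A}\omega_{uv}(Q_{uv}-P_{uv})_+\le\big(2\Delta_0(\mathcal D)+\Delta_I(\hat{\mathcal D})\big)\sum_{x\in X}c_xQ_x+\Psi(q)-\Psi(p).$$
   Context: Let $X$ be a finite set. A DAG over $X$ is a finite directed acyclic graph $\mathcal D=(V,A)$ with $X\subseteq V$, a single source $r$, whose set of sinks is exactly $X$. A flow is $F\in\mathbb R_+^A$ with $\sum_{v:uv\in A}F_{uv}=\sum_{v:vu\in A}F_{vu}$ for $u\in V\setminus(X\cup\{r\})$; $F_u:=\sum_{v:uv\in A}F_{uv}$ for $u\notin X$, $F_x:=\sum_{u:ux\in A}F_{ux}$ for $x\in X$; unit flows have $F_r=1$. $\mathcal P_{\mathcal D}$ is the set of directed paths from $r$ to a sink. A marked DAG is $(\mathcal D,\omega,\theta)$ with $\omega\in\mathbb R_{>0}^A$, $\omega_{uv}>\omega_{vw}$ whenever $uv,vw\in A$, and $\theta\in\mathbb R_{>0}^A$ with $\sum_{v:uv\in A}\theta_{uv}=1$ for $u\in V\setminus X$; it is $\tau$-geometric if $\omega_{uv}\ge\tau\omega_{vw}$ whenever $uv,vw\in A$. $\theta(\gamma):=\prod_{uv\in\gamma}\theta_{uv}$; $\Delta_0(\mathcal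 D)$ is the maximal number of arcs of a path in $\mathcal P_{\mathcal D}$, $\Delta_I(\hat{\mathcal D}):=\max_{\gamma\in\mathcal P_{\mathcal D}}\log(1/\theta(\gamma))$. Put $\eta_{uv}:=1+\log(1/\theta_{uv})$, $\delta_{uv}:=\theta_{uv}/\eta_{uv}$. $\mathcal Q_{\mathcal D}:=\{p\in\mathbb R_+^A:\sum_{v:uv\in A}p_{uv}=1\ \forall u\in V\setminus X\}$; $q^{(u)}:=(q_{uv})_{v:uv\in A}$, $\theta^{(u)}:=(\theta_{uv})_{v:uv\in A}$; $\mathcal Q^{(u)}$ is the probability simplex on $\{v:uv\in A\}$; $\mathbb D^{(u)}(p\|p'):=\frac1\kappa\sum_{v:uv\in A}\frac{\omega_{uv}}{\eta_{uv}}\big[(p_v+\delta_{uv})\log\frac{p_v+\delta_{uv}}{p'_v+\delta_{uv}}+p'_v-p_v\big]$. The step map $\mathcal A(q,c)$ outputs $p\in\mathcal Q_{\mathcal D}$: set $\hat c_x:=c_x$ for $x\in X$; process $u\in V\setminus X$ so that each vertex comes after all its out-neighbours, setting $p^{(u)}:=\arg\min_{p'\in\mathcal Q^{(u)}}\{\mathbb D^{(u)}(p'\|q^{(u)})+\sum_vp'_v\hat c_v\}$ and $\hat c_u:=\sum_vp^{(u)}_v\hat c_v$. $\Lambda(q)$ is the unique unit flow $F$ with $F_{uv}=F_uq_{uv}$ for all $uv\in A$. For $r'\in\mathcal Q_{\mathcal D}$: $\Psi(r'):=-\sum_{u\in V\setminus X}\Lambda(r')_u\,\mathbb D^{(u)}(\theta^{(u)}\|r'^{(u)})$.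 *)

From HB Require Import structures.
From mathcomp Require Import all_boot all_order all_algebra.
From mathcomp Require Import reals exp.
Set Implicit Arguments. Unset Strict Implicit. Unset Printing Implicit Defensive.
Import Order.TTheory GRing.Theory Num.Theory.
Local Open Scope ring_scope.

Definition is_DAG (V : finType) (A : rel V) (r : V) (X : {set V}) : Prop :=
  [/\ (forall u v, A u v -> ~~ connect A v u),
      (forall v, [forall u, ~~ A u v] = (v == r))
    & (forall v, (v \in X) = [forall w, ~~ A v w])].

Section Defs.
Variables (R : realType) (V : finType) (A : rel V) (r : V) (X : {set V}).

Definition outflow (F : V -> V -> R) u : R := \sum_(v | A u v) F u v.
Definition inflow (F : V -> V -> R) u : R := \sum_(w | A w u) F w u.
Definition Fnode (F : V -> V -> R) u : R :=
  if u \in X then inflow F u else outflow F u.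

Definition is_flow (F : V -> V -> R) : Prop :=
  (forall u v, A u v -> 0 <= F u v) /\
  (forall u, u \notin X -> u != r -> outflow F u = inflow F u).

Definition is_unit_flow F : Prop := is_flow F /\ Fnode F r = 1.

Definition is_Lambda (q F : V -> V -> R) : Prop :=
  is_unit_flow F /\ (forall u v, A u v -> F u v = Fnode F u * q u v).

Definition in_simplex u (p : V -> R) : Prop :=
  (forall v, A u v -> 0 <= p v) /\ \sum_(v | A u v) p v = 1.
Definition in_QD (p : V -> V -> R) : Prop :=
  forall u, u \notin X -> in_simplex u (p u).

Definition is_marked (omega theta : V -> V -> R) : Prop :=
  [/\ (forall u v, A u v -> 0 < omega u v),
      (forall u v w, A u v -> A v w -> omega v w < omega u v),
      (forall u v, A u v -> 0 < theta u v)
    & (forall u, u \notin X -> \sum_(v | A u v) theta u v = 1)].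
Definition is_geometric (tau : R) (omega : V -> V -> R) : Prop :=
  forall u v w, A u v -> A v w -> tau * omega v w <= omega u v.

(* paths from r to a sink, given as the sequence of vertices after r *)
Definition is_rpath (s : seq V) : bool := path A r s && (last r s \in X).
Definition theta_path (theta : V -> V -> R) (s : seq V) : R :=
  \prod_(e <- zip (r :: s) s) theta e.1 e.2.
(* every r-path in a DAG visits distinct vertices, so it has < #|V| arcs *)
Definition Delta0 : nat :=
  \max_(k < #|V|) \max_(t : (nat_of_ord k).-tuple V | is_rpath t) (nat_of_ord k).
Definition DeltaI (theta : V -> V -> R) : R :=
  \big[Num.max/0]_(k < #|V|)
     \big[Num.max/0]_(t : (nat_of_ord k).-tuple V | is_rpath t)
        ln (1 / theta_path theta t).

Variables (omega theta : V -> V -> R) (kappa : R).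
Definition eta u v : R := 1 + ln (1 / theta u v).
Definition delta u v : R := theta u v / eta u v.

Definition Div u (p p' : V -> R) : R :=
  kappa^-1 * \sum_(v | A u v) (omega u v / eta u v) *
    ((p v + delta u v) * ln ((p v + delta u v) / (p' v + delta u v)) + p' v - p v).

Definition is_step (q : V -> V -> R) (c : V -> R) (p : V -> V -> R) : Prop :=
  in_QD p /\
  exists chat : V -> R,
    [/\ (forall x, x \in X -> chat x = c x),
        (forall u, u \notin X -> chat u = \sum_(v | A u v) p u v * chat v)
      & (forall u, u \notin X -> forall p' : V -> R, in_simplex u p' ->
           Div u (p u) (q u) + \sum_(v | A u v) p u v * chat v
           <= Div u p' (q u) + \sum_(v | A u v) p' v * chat v)].

(* Psi(r'), with F = Lambda(r') *)
Definition Psi (F r' : V -> V -> R) : R :=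
  - \sum_(u | u \notin X) Fnode F u * Div u (theta u) (r' u).

End Defs.

(* Let E be the excess sum_uv omega_uv (Q_uv - P_uv)_+.  On an arc,
   (Q_uv - P_uv)_+ <= Q_u (q_uv - p_uv)_+ + p_uv (Q_u - P_u)_+, and the node excess
   (Q_u - P_u)_+ is at most the excess entering u; since omega shrinks by the factor
   tau along arcs, the second terms cost at most E / tau.  The first terms are bounded
   vertex by vertex through the optimality (KKT) conditions of the mirror step p^(u):
   sum_v omega_uv (q_uv - p_uv)_+ is at most kappa (D(theta||p) - D(theta||q)) plus
   kappa sum_v q_uv (eta_uv + 1) chat_v.  Weighted by Q_u, the divergence differences
   give Psi(q) - Psi(p) up to the mismatch (Q_u - P_u)_+ D(theta||p), which costs 2E/tau,
   while the cost terms telescope along Q against the potential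
   phi(v) = max over r-v paths of sum (eta + 1) <= 2 Delta_0 + Delta_I, because
   chat_u <= sum_v q_uv chat_v. *)

From Pilot Require Import Defs.
From HB Require Import structures.
From mathcomp Require Import all_boot all_order all_algebra.
From mathcomp Require Import reals exp.
From mathcomp Require Import ring lra.
Set Implicit Arguments. Unset Strict Implicit. Unset Printing Implicit Defensive.
Import Order.TTheory GRing.Theory Num.Theory.
Local Open Scope ring_scope.

Section RealInequalities.
Variable R : realType.

Lemma ln_le_subr1 (x : R) : 0 < x -> ln x <= x - 1.
Proof. by move=> x0; have := @le_ln1Dx R (x - 1); rewrite addrCA subrr addr0; apply; lra. Qed.

Lemma subr_le_mul_ln_div (a b : R) : 0 < a -> 0 < b -> a - b <= a * ln (a / b).
Proof.
move=> a0 b0; have := ler_wpM2l (ltW a0) (ln_le_subr1 (divr_gt0 b0 a0)).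
rewrite !ln_div //.
have e : a * (b / a - 1) = b - a by field; rewrite gt_eqF.
rewrite e; lra.
Qed.

Lemma mul_ln_div_le (a b : R) : 0 < a -> 0 < b ->
  a * ln (a / b) + b - a <= (a - b) ^+ 2 / b.
Proof.
move=> a0 b0; have := ler_wpM2l (ltW a0) (ln_le_subr1 (divr_gt0 a0 b0)).
have -> : (a - b) ^+ 2 / b = a * (a / b - 1) + b - a by field; rewrite gt_eqF.
lra.
Qed.

(* If [G] were negative, [t := - G / (2 C - G)] would make [t G + t^2 C] negative. *)
Lemma ge0_of_quadratic_perturbation (G C : R) : 0 <= C ->
  (forall t, 0 < t -> t <= 1 -> 0 <= t * G + t ^+ 2 * C) -> 0 <= G.
Proof.
move=> C0 hG; rewrite leNgt; apply/negP => G0.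
have D0 : 0 < 2 * C - G by lra.
have t0 : 0 < - G / (2 * C - G) by rewrite divr_gt0 //; lra.
have t1 : - G / (2 * C - G) <= 1 by rewrite ler_pdivrMr // mul1r; lra.
have := hG _ t0 t1.
have -> : - G / (2 * C - G) * G + (- G / (2 * C - G)) ^+ 2 * C
          = - (G ^+ 2 * (C - G) / (2 * C - G) ^+ 2) by field; rewrite gt_eqF.
rewrite oppr_ge0 leNgt => /negP; apply.
have G2 : 0 < G ^+ 2 by rewrite expr2; nra.
by rewrite divr_gt0 ?exprn_gt0 // mulr_gt0 //; lra.
Qed.

Lemma pospart_ge0 (x : R) : 0 <= Num.max 0 x.
Proof. by rewrite le_max lexx. Qed.

Lemma le_pospart (x : R) : x <= Num.max 0 x.
Proof. by rewrite le_max lexx orbT. Qed.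

End RealInequalities.

Section Divergence.
Variables (R : realType) (V : finType) (A : rel V).
Variables (omega theta : V -> V -> R) (kappa : R).
Hypothesis kappa_gt0 : 0 < kappa.
Hypothesis omega_gt0 : forall u v, A u v -> 0 < omega u v.
Hypothesis theta_gt0 : forall u v, A u v -> 0 < theta u v.
Hypothesis theta_le1 : forall u v, A u v -> theta u v <= 1.

Local Notation eta := (Defs.eta theta).
Local Notation delta := (delta theta).
Local Notation Div := (Div A omega theta kappa).

Definition weight u v : R := omega u v / eta u v.

Definition div_term u v (x y : R) : R :=
  weight u v * ((x + delta u v) * ln ((x + delta u v) / (y + delta u v)) + y - x).

Lemma DivE u (x y : V -> R) :
  Div u x y = kappa^-1 * \sum_(v | A u v) div_term u v (x v) (y v).
Proof. by []. Qed.

Lemma eta_ge1 u v : A u v -> 1 <= eta u v.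
Proof.
move=> h; have : 0 <= ln (1 / theta u v).
  by apply: ln_ge0; rewrite div1r invf_ge1 ?theta_gt0 ?theta_le1.
rewrite /Defs.eta; lra.
Qed.

Lemma eta_gt0 u v : A u v -> 0 < eta u v.
Proof. by move=> h; apply: lt_le_trans (eta_ge1 h). Qed.

Lemma delta_gt0 u v : A u v -> 0 < delta u v.
Proof. by move=> h; rewrite /Defs.delta divr_gt0 ?theta_gt0 ?eta_gt0. Qed.

Lemma delta_mul_eta u v : A u v -> delta u v * eta u v = theta u v.
Proof. by move=> h; rewrite /Defs.delta divfK // gt_eqF // eta_gt0. Qed.

Lemma weight_mul_eta u v : A u v -> weight u v * eta u v = omega u v.
Proof. by move=> h; rewrite /weight divfK // gt_eqF // eta_gt0. Qed.

Lemma weight_gt0 u v : A u v -> 0 < weight u v.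
Proof. by move=> h; rewrite divr_gt0 ?omega_gt0 ?eta_gt0. Qed.

Lemma weight_le u v : A u v -> weight u v <= omega u v.
Proof.
move=> h; rewrite ler_pdivrMr ?eta_gt0 //.
by rewrite ler_peMr ?eta_ge1 // ltW // omega_gt0.
Qed.

Lemma div_term_ge0 u v x y : A u v -> 0 <= x -> 0 <= y -> 0 <= div_term u v x y.
Proof.
move=> h x0 y0; rewrite mulr_ge0 ?(ltW (weight_gt0 h)) //.
have d0 := delta_gt0 h.
have := @subr_le_mul_ln_div R (x + delta u v) (y + delta u v); lra.
Qed.

Lemma Div_ge0 u x y : (forall v, A u v -> 0 <= x v) -> (forall v, A u v -> 0 <= y v) ->
  0 <= Div u x y.
Proof.
move=> hx hy; rewrite DivE; apply: mulr_ge0; first by rewrite invr_ge0 ltW.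
by apply: sumr_ge0 => v h; apply: div_term_ge0; [|apply: hx|apply: hy].
Qed.

Lemma Div_xx u x : (forall v, A u v -> 0 <= x v) -> Div u x x = 0.
Proof.
move=> hx; rewrite DivE big1 ?mulr0 // => v h.
have d0 := delta_gt0 h; have x0 := hx v h.
by rewrite /div_term divff ?ln1 ?mulr0 ?add0r ?subrr ?mulr0 // gt_eqF //; lra.
Qed.

Lemma div_term_theta_le u v y : A u v -> 0 <= y ->
  div_term u v (theta u v) y <= omega u v * (theta u v + y).
Proof.
move=> h y0; have d0 := delta_gt0 h; have t0 := theta_gt0 h.
have e0 := eta_gt0 h; have de := delta_mul_eta h; have w0 := weight_gt0 h.
have lnq : ln ((theta u v + delta u v) / (y + delta u v)) <= eta u v.
  apply: le_trans (_ : ln (1 + eta u v) <= _); last by apply: le_ln1Dx; lra.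
  have -> : 1 + eta u v = (theta u v + delta u v) / delta u v.
    by rewrite -de; field; rewrite gt_eqF.
  rewrite ler_ln ?posrE ?divr_gt0 //; try lra.
  by rewrite ler_pM2l ?lef_pV2 ?posrE; lra.
have : div_term u v (theta u v) y <=
       weight u v * ((theta u v + delta u v) * eta u v + y - theta u v).
  apply: ler_wpM2l; first exact: ltW.
  by rewrite !lerD2r; apply: ler_wpM2l => //; lra.
have -> : weight u v * ((theta u v + delta u v) * eta u v + y - theta u v)
          = omega u v * theta u v + weight u v * y.
  by rewrite -(weight_mul_eta h) -de; ring.
have := ler_wpM2r y0 (weight_le h); lra.
Qed.

Lemma Div_theta_le u y : (forall v, A u v -> 0 <= y v) ->
  Div u (theta u) y <= kappa^-1 * \sum_(v | A u v) omega u v * (theta u v + y v).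
Proof.
move=> hy; rewrite DivE ler_pM2l ?invr_gt0 //.
by apply: ler_sum => v h; apply: div_term_theta_le => //; apply: hy.
Qed.

Lemma Div_theta_subE u x y :
  (forall v, A u v -> 0 <= x v) -> (forall v, A u v -> 0 <= y v) ->
  kappa * (Div u (theta u) x - Div u (theta u) y)
  = \sum_(v | A u v) weight u v * ((theta u v + delta u v) *
      (ln (y v + delta u v) - ln (x v + delta u v)) + x v - y v).
Proof.
move=> hx hy; rewrite !DivE -mulrBr mulVKf ?gt_eqF // -sumrB.
apply: eq_bigr => v h; have d0 := delta_gt0 h; have t0 := theta_gt0 h.
have x0 := hx v h; have y0 := hy v h.
rewrite /div_term !ln_div ?posrE; try lra; ring.
Qed.

Lemma div_term_sub_le u v a b c : A u v -> 0 <= a -> 0 <= b -> 0 <= c ->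
  div_term u v a c - div_term u v b c <=
  weight u v * ((a - b) ^+ 2 / (b + delta u v))
  + (a - b) * (weight u v * (ln (b + delta u v) - ln (c + delta u v))).
Proof.
move=> h a0 b0 c0; have d0 := delta_gt0 h; have w0 := weight_gt0 h.
have := @mul_ln_div_le R (a + delta u v) (b + delta u v).
rewrite ln_div ?posrE; try lra.
have -> : a + delta u v - (b + delta u v) = a - b by ring.
move=> /(_ ltac:(lra) ltac:(lra)) /(ler_wpM2l (ltW w0)).
by rewrite /div_term !ln_div ?posrE; try lra; nra.
Qed.

Lemma Div_sub_le u x y z :
  (forall v, A u v -> 0 <= x v) -> (forall v, A u v -> 0 <= y v) ->
  (forall v, A u v -> 0 <= z v) ->
  kappa * (Div u x z - Div u y z) <=
  \sum_(v | A u v) (weight u v * ((x v - y v) ^+ 2 / (y v + delta u v))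
     + (x v - y v) * (weight u v * (ln (y v + delta u v) - ln (z v + delta u v)))).
Proof.
move=> hx hy hz; rewrite !DivE -mulrBr mulVKf ?gt_eqF // -sumrB.
by apply: ler_sum => v h; apply: div_term_sub_le; [|apply: hx|apply: hy|apply: hz].
Qed.

Definition minimizes u (x y c : V -> R) : Prop :=
  forall x', in_simplex A u x' ->
  Div u x y + \sum_(v | A u v) x v * c v <= Div u x' y + \sum_(v | A u v) x' v * c v.

(* The gradient of [x |-> kappa * (Div u x y + <x, c>)] at [x]. *)
Definition grad u (x y c : V -> R) v : R :=
  kappa * c v + weight u v * (ln (x v + delta u v) - ln (y v + delta u v)).

(* [al] is the common value of the gradient on the support of the minimizer [x],
   and a lower bound for it elsewhere. *)
Lemma arc_local_bound u v (x y c al : R) : A u v ->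
  0 <= x -> 0 <= y -> 0 <= c -> 0 <= al ->
  al <= kappa * c + weight u v * (ln (x + delta u v) - ln (y + delta u v)) ->
  (0 < x -> kappa * c + weight u v * (ln (x + delta u v) - ln (y + delta u v)) = al) ->
  omega u v * Num.max 0 (y - x) <=
  weight u v * ((theta u v + delta u v) * (ln (y + delta u v) - ln (x + delta u v)) + x - y)
  + kappa * (y * (eta u v + 1) * c) + al * (theta u v - y).
Proof.
move=> h x0 y0 c0 al0; rewrite -(weight_mul_eta h) -(delta_mul_eta h).
have d0 := delta_gt0 h; have e1 := eta_ge1 h; have w0 := weight_gt0 h.
move: d0 e1 w0; set w := weight u v; set d := delta u v; set e := eta u v.
set L := ln (y + d) - ln (x + d).
have -> : w * (ln (x + d) - ln (y + d)) = - (w * L) by rewrite /L; ring.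
move=> d0 e1 w0 grad_ge grad_supp.
have gap : y - x <= (y + d) * L.
  have := @subr_le_mul_ln_div R (y + d) (x + d) ltac:(lra) ltac:(lra).
  by rewrite ln_div ?posrE -/L; lra.
have kc : 0 <= kappa * c by apply: mulr_ge0 => //; exact: ltW.
have wgap : w * (y - x) <= w * ((y + d) * L) by apply: ler_wpM2l => //; exact: ltW.
case: (lerP x y) => xy.
  rewrite max_r ?subr_ge0 //.
  have wL : w * L <= kappa * c - al by lra.
  have ye0 : 0 <= y * (e + 1) by apply: mulr_ge0; lra.
  have de0 : 0 <= d * e + y * e by apply: addr_ge0; apply: mulr_ge0; lra.
  have := ler_wpM2r ye0 wL; have := mulr_ge0 al0 de0; nra.
rewrite max_l ?mulr0; last by rewrite subr_le0 ltW.
have wL : w * L = kappa * c - al by have := grad_supp (le_lt_trans y0 xy); lra.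
have s6 : 0 <= kappa * c * (d * e) by apply: mulr_ge0 => //; apply: mulr_ge0; lra.
have s7 : 0 <= kappa * c * (y * e) by apply: mulr_ge0 => //; apply: mulr_ge0; lra.
have f1 : w * L * (d * e + d) = (kappa * c - al) * (d * e + d) by rewrite wL.
have f2 : w * L * (y + d) = (kappa * c - al) * (y + d) by rewrite wL.
nra.
Qed.

Section Minimizer.
Variables (u : V) (x y c : V -> R).
Hypothesis x_ge0 : forall v, A u v -> 0 <= x v.
Hypothesis y_ge0 : forall v, A u v -> 0 <= y v.
Hypothesis x_sum1 : \sum_(v | A u v) x v = 1.
Hypothesis x_min : minimizes u x y c.

Lemma minimizes_first_order x' : in_simplex A u x' ->
  0 <= \sum_(v | A u v) (x' v - x v) * grad u x y c v.
Proof.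
move=> [x'_ge0 x'_sum1].
set C := \sum_(v | A u v) weight u v * ((x' v - x v) ^+ 2 / (x v + delta u v)).
apply: (@ge0_of_quadratic_perturbation _ _ C) => [|t t0 t1].
  apply: sumr_ge0 => v h; apply: mulr_ge0; first exact/ltW/weight_gt0.
  by apply: divr_ge0; [exact: sqr_ge0 | have := delta_gt0 h; have := x_ge0 h; lra].
pose xt v := x v + t * (x' v - x v).
have xt_simplex : in_simplex A u xt.
  split=> [v h|]; first by rewrite /xt; have := x_ge0 h; have := x'_ge0 v h; nra.
  by rewrite big_split /= -mulr_sumr sumrB x'_sum1 x_sum1 subrr mulr0 addr0.
have xt_ge0 v : A u v -> 0 <= xt v by case: xt_simplex => + _; apply.
set SL := \sum_(v | A u v) (x' v - x v) *
            (weight u v * (ln (x v + delta u v) - ln (y v + delta u v))).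
set Sc := \sum_(v | A u v) (x' v - x v) * c v.
have gradE : \sum_(v | A u v) (x' v - x v) * grad u x y c v = kappa * Sc + SL.
  by rewrite /Sc /SL mulr_sumr -big_split; apply: eq_bigr => v _ /=; rewrite /grad; ring.
have costE : \sum_(v | A u v) xt v * c v - \sum_(v | A u v) x v * c v = t * Sc.
  by rewrite -sumrB /Sc mulr_sumr; apply: eq_bigr => v _; rewrite /xt; ring.
have Div_xt : kappa * (Div u xt y - Div u x y) <= t ^+ 2 * C + t * SL.
  suff <- : \sum_(v | A u v) (weight u v * ((xt v - x v) ^+ 2 / (x v + delta u v))
     + (xt v - x v) * (weight u v * (ln (x v + delta u v) - ln (y v + delta u v))))
     = t ^+ 2 * C + t * SL by exact: Div_sub_le.
  rewrite /C /SL !mulr_sumr -big_split.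
  by apply: eq_bigr => v _ /=; rewrite /xt; ring.
have := ler_wpM2l (ltW kappa_gt0) (x_min xt_simplex).
rewrite gradE -subr_ge0 -mulrBr opprD addrACA costE; nra.
Qed.

Lemma support_nonempty : exists2 v, A u v & 0 < x v.
Proof.
have [v /andP[hv xv]] : exists v, A u v && (0 < x v).
  by apply: psumr_neq0P => //; rewrite x_sum1; exact/eqP/oner_neq0.
by exists v.
Qed.

(* Testing first-order optimality against the vertex of the simplex where the
   gradient is least shows that the gradient is constant on the support of [x]. *)
Lemma minimizes_kkt : exists2 al : R,
  (forall v, A u v -> al <= grad u x y c v) &
  (forall v, A u v -> 0 < x v -> grad u x y c v = al).
Proof.
have [v1 hv1 _] := support_nonempty.
case: (arg_minP (grad u x y c) hv1) => vm hvm grad_min.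
set al := grad u x y c vm.
pose e v : R := (v == vm)%:R.
have e_simplex : in_simplex A u e.
  split=> [v _|]; first by rewrite /e ler0n.
  by rewrite (bigD1 vm) //= /e eqxx big1 ?addr0 // => v /andP[_ /negbTE ->].
have slack_ge0 v : A u v -> 0 <= x v * (grad u x y c v - al).
  by move=> h; rewrite mulr_ge0 ?x_ge0 // subr_ge0 grad_min.
have slack_sum : \sum_(v | A u v) x v * (grad u x y c v - al) = 0.
  apply/le_anti; rewrite sumr_ge0 // andbT.
  have first_order := minimizes_first_order e_simplex.
  have first_orderE : \sum_(v | A u v) (e v - x v) * grad u x y c v
                      = al - \sum_(v | A u v) x v * grad u x y c v.
    under eq_bigr do rewrite mulrBl.
    rewrite sumrB (bigD1 vm) //= big1 => [|v /andP[_ hv]]; last by rewrite /e (negbTE hv) mul0r.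
    by rewrite /e eqxx mul1r addr0.
  have slackE : \sum_(v | A u v) x v * (grad u x y c v - al)
                = \sum_(v | A u v) x v * grad u x y c v - al.
    under eq_bigr do rewrite mulrBr.
    by rewrite sumrB -mulr_suml x_sum1 mul1r.
  lra.
exists al => // v h xv.
have /eqP := psumr_eq0P slack_ge0 slack_sum h.
by rewrite mulf_eq0 subr_eq0 (gt_eqF xv) => /eqP.
Qed.

Lemma minimizes_level_ge0 al :
  (forall v, A u v -> 0 <= c v) -> \sum_(v | A u v) y v = 1 ->
  (forall v, A u v -> 0 < x v -> grad u x y c v = al) -> 0 <= al.
Proof.
move=> c_ge0 y_sum1 grad_supp; rewrite leNgt; apply/negP => al_lt0.
have y_gt_x v : A u v -> 0 < x v -> x v < y v.
  move=> h xv; have := grad_supp v h xv; rewrite /grad => gradE.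
  have d0 := delta_gt0 h; have w0 := weight_gt0 h; have y0 := y_ge0 h.
  have : weight u v * (ln (x v + delta u v) - ln (y v + delta u v)) < 0.
    by have := mulr_ge0 (ltW kappa_gt0) (c_ge0 v h); lra.
  by rewrite pmulr_rlt0 // subr_lt0 ltr_ln ?posrE; lra.
have y_ge_x v : A u v -> 0 <= y v - x v.
  move=> h; have := x_ge0 h; rewrite le_eqVlt => /orP[/eqP <-|xv].
    by rewrite subr0 y_ge0.
  by rewrite subr_ge0 ltW // y_gt_x.
have [v1 hv1 xv1] := support_nonempty.
have := psumr_eq0P y_ge_x _ hv1; rewrite sumrB y_sum1 x_sum1 subrr => /(_ erefl).
by have := y_gt_x v1 hv1 xv1; lra.
Qed.

Lemma minimizes_local_bound :
  (forall v, A u v -> 0 <= c v) -> \sum_(v | A u v) y v = 1 ->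
  \sum_(v | A u v) theta u v = 1 ->
  \sum_(v | A u v) omega u v * Num.max 0 (y v - x v)
  <= kappa * (Div u (theta u) x - Div u (theta u) y)
     + kappa * \sum_(v | A u v) y v * (eta u v + 1) * c v.
Proof.
move=> c_ge0 y_sum1 theta_sum1.
have [al grad_ge grad_supp] := minimizes_kkt.
have al_ge0 := minimizes_level_ge0 c_ge0 y_sum1 grad_supp.
apply: le_trans (_ : _ <= \sum_(v | A u v) (weight u v * ((theta u v + delta u v) *
    (ln (y v + delta u v) - ln (x v + delta u v)) + x v - y v)
    + kappa * (y v * (eta u v + 1) * c v) + al * (theta u v - y v))) _.
  apply: ler_sum => v h; apply: arc_local_bound; rewrite ?x_ge0 ?y_ge0 ?c_ge0 //.
    exact: grad_ge.
  exact: grad_supp.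
rewrite !big_split /= -!mulr_sumr sumrB theta_sum1 y_sum1 subrr mulr0 addr0.
by rewrite Div_theta_subE.
Qed.

End Minimizer.

End Divergence.

Section Acyclic.
Variables (T : finType) (e : rel T).
Hypothesis e_acyclic : forall x y, e x y -> ~~ connect e y x.

(* Each arc strictly shrinks the set of vertices reachable from its tail. *)
Lemma acyclic_ind (P : T -> Prop) :
  (forall x, (forall y, e x y -> P y) -> P x) -> forall x, P x.
Proof.
move=> IHe x; have [n] := ubnP #|[set y | connect e x y]|.
elim: n x => [|n IHn] x; first by rewrite ltn0.
move=> reach_x; apply: IHe => y exy; apply: IHn.
have reach_yx : [set z | connect e y z] \proper [set z | connect e x z].
  apply/properP; split.
    by apply/subsetP => z; rewrite !inE; apply: connect_trans (connect1 exy).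
  by exists x; rewrite !inE ?connect0 // (negbTE (e_acyclic exy)).
by apply: leq_trans (proper_card reach_yx) _; rewrite -ltnS.
Qed.

Lemma acyclic_path_uniq x s : path e x s -> uniq (x :: s).
Proof.
elim: s x => [|y s IHs] x //= /andP[exy ys]; have /= -> := IHs y ys.
by rewrite andbT; apply/negP => /(path_connect ys); apply/negP/e_acyclic.
Qed.

Lemma acyclic_path_size x s : path e x s -> (size s < #|T|)%N.
Proof. by move=> /acyclic_path_uniq/card_uniqP /= <-; exact: max_card. Qed.

End Acyclic.

Lemma acyclic_rev (T : finType) (e : rel T) :
  (forall x y, e x y -> ~~ connect e y x) ->
  forall x y, e y x -> ~~ connect [rel x y | e y x] y x.
Proof. by move=> e_acyclic x y eyx; rewrite connect_rev; exact: e_acyclic. Qed.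

Section RootedDAG.
Variables (V : finType) (A : rel V) (r : V).
Hypothesis A_acyclic : forall u v, A u v -> ~~ connect A v u.
Hypothesis r_source : forall v, [forall u, ~~ A u v] = (v == r).

Lemma no_arc_to_source u : ~~ A u r.
Proof. by move: (r_source r); rewrite eqxx => /forallP. Qed.

Lemma connect_source v : connect A r v.
Proof.
elim/(acyclic_ind (acyclic_rev A_acyclic)): v => v IHv.
case: (eqVneq v r) => [->|v_neq_r]; first exact: connect0.
move: (r_source v); rewrite (negbTE v_neq_r) => /negbT/forallPn[u].
by rewrite negbK => Auv; apply: connect_trans (IHv u Auv) (connect1 Auv).
Qed.

End RootedDAG.

Fixpoint path_cost (R : realType) (V : finType) (theta : V -> V -> R) (x : V) (s : seq V) : R :=
  if s is y :: s' then Defs.eta theta x y + 1 + path_cost theta y s' else 0.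

(* Paths in a DAG are shorter than [#|V|], so tuples of length [< #|V|] cover them all. *)
Definition potential (R : realType) (V : finType) (A : rel V) (r : V)
    (theta : V -> V -> R) (v : V) : R :=
  \big[Num.max/0]_(k < #|V|)
     \big[Num.max/0]_(t : (nat_of_ord k).-tuple V | path A r t && (last r t == v))
        path_cost theta r t.

Section Potential.
Variables (R : realType) (V : finType) (A : rel V) (r : V) (X : {set V}).
Variable theta : V -> V -> R.
Hypothesis A_acyclic : forall u v, A u v -> ~~ connect A v u.
Hypothesis r_source : forall v, [forall u, ~~ A u v] = (v == r).
Hypothesis theta_gt0 : forall u v, A u v -> 0 < theta u v.
Hypothesis theta_le1 : forall u v, A u v -> theta u v <= 1.

Local Notation eta := (Defs.eta theta).
Local Notation cost := (path_cost theta).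
Local Notation phi := (potential A r theta).

Lemma path_cost_rcons x s v : cost x (rcons s v) = cost x s + (eta (last x s) v + 1).
Proof. by elim: s x => [|y s IHs] x /=; rewrite ?addr0 ?add0r ?IHs ?addrA. Qed.

Lemma path_cost_ge0 x s : path A x s -> 0 <= cost x s.
Proof.
elim: s x => [|y s IHs] x //= /andP[Axy ys].
by have := IHs y ys; have := eta_ge1 theta_gt0 theta_le1 Axy; lra.
Qed.

Lemma theta_prod_gt0 x s : path A x s -> 0 < \prod_(e <- zip (x :: s) s) theta e.1 e.2.
Proof.
elim: s x => [|y s IHs] x /=; first by rewrite big_nil ltr01.
by move=> /andP[Axy ys]; rewrite big_cons mulr_gt0 ?theta_gt0 ?IHs.
Qed.

Lemma path_costE x s : path A x s ->
  cost x s = 2 * (size s)%:R + ln (1 / \prod_(e <- zip (x :: s) s) theta e.1 e.2).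
Proof.
elim: s x => [|y s IHs] x /=; first by rewrite big_nil divr1 ln1 mulr0 addr0.
move=> /andP[Axy ys]; rewrite big_cons /= IHs // /Defs.eta.
have t0 := theta_gt0 Axy; have P0 := theta_prod_gt0 ys.
set P := \prod_(e <- _) _ in P0 *.
have -> : 1 / (theta x y * P) = 1 / theta x y * (1 / P) by rewrite mulf_div mulr1.
rewrite [ln (_ * (1 / P))]lnM ?posrE ?divr_gt0 //.
by rewrite -natr1; ring.
Qed.

Lemma potential_ge0 v : 0 <= phi v.
Proof. exact: bigmax_ge_id. Qed.

Lemma path_cost_le_potential s : path A r s -> cost r s <= phi (last r s).
Proof.
move=> rs; apply: (bigmax_sup (Ordinal (acyclic_path_size A_acyclic rs))) => //.
by apply: (bigmax_sup (in_tuple s)); rewrite //= rs eqxx.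
Qed.

Lemma potential_arc u v : A u v -> phi u + (eta u v + 1) <= phi v.
Proof.
move=> Auv; rewrite -lerBrDr.
have rcons_le s : path A r s -> last r s = u -> cost r s <= phi v - (eta u v + 1).
  move=> rs su; have rsv : path A r (rcons s v) by rewrite rcons_path rs su Auv.
  by have := path_cost_le_potential rsv; rewrite path_cost_rcons last_rcons su; lra.
have [s rs su] := connectP (connect_source A_acyclic r_source u).
have arc_le : 0 <= phi v - (eta u v + 1).
  exact: le_trans (path_cost_ge0 rs) (rcons_le s rs (esym su)).
apply: bigmax_le => // k _; apply: bigmax_le => // t /andP[rt /eqP tu].
exact: rcons_le.
Qed.

Lemma potential_sink x : x \in X ->
  phi x <= 2 * (Delta0 A r X)%:R + DeltaI A r X theta.
Proof.
move=> xX; have DI0 : 0 <= DeltaI A r X theta by apply: bigmax_ge_id.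
have B0 : 0 <= 2 * (Delta0 A r X)%:R + DeltaI A r X theta.
  by apply: addr_ge0 => //; apply: mulr_ge0.
apply: bigmax_le => // k _; apply: bigmax_le => // t /andP[rt /eqP tx].
have rpath_t : is_rpath A r X t by rewrite /is_rpath rt tx xX.
rewrite path_costE // size_tuple lerD //.
  rewrite ler_pM2l ?ler_nat //.
  rewrite /Delta0; apply: leq_trans (@leq_bigmax _ (fun k' : 'I_#|V| =>
    \max_(t' : (nat_of_ord k').-tuple V | is_rpath A r X t') nat_of_ord k') k).
  exact: (@leq_bigmax_cond _ (fun t' : (nat_of_ord k).-tuple V => is_rpath A r X t')
            (fun _ => nat_of_ord k) t rpath_t).
rewrite -/(theta_path r theta t).
by apply: (bigmax_sup k) => //; exact: (bigmax_sup t).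
Qed.

End Potential.

Section UnitFlow.
Variables (R : realType) (V : finType) (A : rel V) (r : V) (X : {set V}).
Hypothesis r_source : forall v, [forall u, ~~ A u v] = (v == r).
Variables (F y : V -> V -> R).
Hypothesis F_Lambda : is_Lambda A r X y F.

Lemma Lambda_arc_ge0 u v : A u v -> 0 <= F u v.
Proof. by case: F_Lambda => [[[F_ge0 _] _] _]; apply: F_ge0. Qed.

Lemma Lambda_node_ge0 u : 0 <= Fnode A X F u.
Proof. by rewrite /Fnode; case: ifP => _; apply: sumr_ge0 => v; apply: Lambda_arc_ge0. Qed.

Lemma Lambda_source : Fnode A X F r = 1.
Proof. by case: F_Lambda => [[_ ->]]. Qed.

Lemma Lambda_arcE u v : A u v -> F u v = Fnode A X F u * y u v.
Proof. by case: F_Lambda => _; apply. Qed.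

Lemma Lambda_inflowE u : u != r -> Fnode A X F u = inflow A F u.
Proof.
move=> u_neq_r; rewrite /Fnode; case: ifP => // /negbT uX.
by case: F_Lambda => [[[_ conservation] _] _]; apply: conservation.
Qed.

Lemma inflow_source : inflow A F r = 0.
Proof. by rewrite /inflow big_pred0 // => w; apply/negbTE/no_arc_to_source. Qed.

Lemma inflow_le_Lambda_node u : inflow A F u <= Fnode A X F u.
Proof.
case: (eqVneq u r) => [->|u_neq_r]; last by rewrite Lambda_inflowE.
by rewrite inflow_source Lambda_source ler01.
Qed.

End UnitFlow.

Lemma exchange_arcs (M : nmodType) (T : finType) (e : rel T) (g : T -> T -> M) :
  \sum_u \sum_(v | e u v) g u v = \sum_v \sum_(u | e u v) g u v.
Proof.
under eq_bigr do rewrite big_mkcond.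
by rewrite exchange_big; apply: eq_bigr => v _; rewrite [RHS]big_mkcond.
Qed.

Section Step.
Variables (R : realType) (V : finType) (A : rel V) (r : V) (X : {set V}).
Variables (omega theta : V -> V -> R) (tau kappa : R).
Variables (q p Q P : V -> V -> R) (c chat : V -> R).
Hypothesis A_acyclic : forall u v, A u v -> ~~ connect A v u.
Hypothesis r_source : forall v, [forall u, ~~ A u v] = (v == r).
Hypothesis X_sinks : forall v, (v \in X) = [forall w, ~~ A v w].
Hypothesis omega_gt0 : forall u v, A u v -> 0 < omega u v.
Hypothesis theta_gt0 : forall u v, A u v -> 0 < theta u v.
Hypothesis theta_sum1 : forall u, u \notin X -> \sum_(v | A u v) theta u v = 1.
Hypothesis omega_geometric : forall u v w, A u v -> A v w -> tau * omega v w <= omega u v.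
Hypothesis tau_gt0 : 0 < tau.
Hypothesis kappa_gt0 : 0 < kappa.
Hypothesis q_QD : in_QD A X q.
Hypothesis p_QD : in_QD A X p.
Hypothesis c_ge0 : forall x, x \in X -> 0 <= c x.
Hypothesis chat_sinks : forall x, x \in X -> chat x = c x.
Hypothesis chat_inner : forall u, u \notin X -> chat u = \sum_(v | A u v) p u v * chat v.
Hypothesis p_min : forall u, u \notin X -> minimizes A omega theta kappa u (p u) (q u) chat.
Hypothesis Q_Lambda : is_Lambda A r X q Q.
Hypothesis P_Lambda : is_Lambda A r X p P.

Local Notation eta := (Defs.eta theta).
Local Notation Dtheta u x := (Div A omega theta kappa u (theta u) x).
Local Notation pospart x := (Num.max 0 x).
Local Notation excess := (\sum_u \sum_(v | A u v) omega u v * pospart (Q u v - P u v)).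
Local Notation in_excess u := (\sum_(w | A w u) pospart (Q w u - P w u)).
Local Notation in_wexcess u := (\sum_(w | A w u) omega w u * pospart (Q w u - P w u)).
Local Notation local_excess u := (\sum_(v | A u v) omega u v * pospart (q u v - p u v)).

Lemma arc_tail_notin u v : A u v -> u \notin X.
Proof. by move=> Auv; rewrite X_sinks negb_forall; apply/existsP; exists v; rewrite Auv. Qed.

Lemma theta_le1 u v : A u v -> theta u v <= 1.
Proof.
move=> Auv; rewrite -(theta_sum1 (arc_tail_notin Auv)) (bigD1 v) //= lerDl.
by apply: sumr_ge0 => w /andP[Auw _]; exact/ltW/theta_gt0.
Qed.

Lemma sum_tails_notin (g : V -> V -> R) :
  \sum_(u | u \notin X) \sum_(v | A u v) g u v = \sum_u \sum_(v | A u v) g u v.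
Proof.
rewrite [RHS](bigID (fun u => u \notin X)) /= [X in _ = _ + X]big1 ?addr0 // => u.
by rewrite negbK => uX; rewrite big_pred0 // => v; apply/negbTE/negP => /arc_tail_notin /negP.
Qed.

Lemma p_arc_ge0 u v : A u v -> 0 <= p u v.
Proof. by move=> Auv; case: (p_QD (arc_tail_notin Auv)) => + _; apply. Qed.

Lemma chat_ge0 v : 0 <= chat v.
Proof.
elim/(acyclic_ind A_acyclic): v => u IHu.
case: (boolP (u \in X)) => uX; first by rewrite chat_sinks // c_ge0.
by rewrite chat_inner //; apply: sumr_ge0 => v Auv; rewrite mulr_ge0 ?p_arc_ge0 ?IHu.
Qed.

(* Comparing [p u] with the competitor [q u], for which the divergence vanishes. *)
Lemma chat_le_mean u : u \notin X -> chat u <= \sum_(v | A u v) q u v * chat v.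
Proof.
move=> uX; have [q_ge0 _] := q_QD uX; have [p_ge0 _] := p_QD uX.
have := p_min uX (q_QD uX).
rewrite (Div_xx _ _ theta_gt0 theta_le1) // -chat_inner //.
by have := Div_ge0 kappa_gt0 omega_gt0 theta_gt0 theta_le1 p_ge0 q_ge0; lra.
Qed.

Lemma node_excess_le u : pospart (Fnode A X Q u - Fnode A X P u) <= in_excess u.
Proof.
have I0 : 0 <= in_excess u by apply: sumr_ge0 => w _; exact: pospart_ge0.
rewrite ge_max I0 /=; move: I0; case: (eqVneq u r) => [->|u_neq_r] I0.
  by rewrite (Lambda_source Q_Lambda) (Lambda_source P_Lambda) subrr.
rewrite (Lambda_inflowE Q_Lambda) // (Lambda_inflowE P_Lambda) //.
by rewrite /inflow -sumrB ler_sum // => w _; exact: le_pospart.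
Qed.

Lemma geometric_in_excess u v : A u v -> omega u v * in_excess u <= in_wexcess u / tau.
Proof.
move=> Auv; rewrite mulr_sumr mulr_suml ler_sum // => w Awu.
rewrite ler_pdivlMr // mulrAC [_ * tau]mulrC.
by apply: ler_wpM2r; [exact: pospart_ge0 | exact: omega_geometric].
Qed.

Lemma arc_excess_le u v : A u v ->
  pospart (Q u v - P u v) <=
  Fnode A X Q u * pospart (q u v - p u v) + p u v * pospart (Fnode A X Q u - Fnode A X P u).
Proof.
move=> Auv; have Q0 := Lambda_node_ge0 Q_Lambda u; have p0 := p_arc_ge0 Auv.
rewrite (Lambda_arcE Q_Lambda Auv) (Lambda_arcE P_Lambda Auv) ge_max.
rewrite addr_ge0 ?mulr_ge0 ?pospart_ge0 //=.
have := ler_wpM2l Q0 (le_pospart (q u v - p u v)).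
have := ler_wpM2l p0 (le_pospart (Fnode A X Q u - Fnode A X P u)).
lra.
Qed.

Lemma vertex_excess_le u :
  \sum_(v | A u v) omega u v * pospart (Q u v - P u v)
  <= Fnode A X Q u * local_excess u + in_wexcess u / tau.
Proof.
have p_sum_le1 : \sum_(v | A u v) p u v <= 1.
  case: (boolP (u \in X)) => uX; last by case: (p_QD uX) => _ ->.
  by rewrite big_pred0 ?ler01 // => v; apply/negbTE/negP => /arc_tail_notin; rewrite uX.
have J0 : 0 <= in_wexcess u / tau.
  apply: divr_ge0; last exact: ltW.
  by apply: sumr_ge0 => w Awu; apply: mulr_ge0; [exact/ltW/omega_gt0 | exact: pospart_ge0].
apply: le_trans (_ : \sum_(v | A u v) (Fnode A X Q u * (omega u v * pospart (q u v - p u v))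
    + p u v * (in_wexcess u / tau)) <= _).
  apply: ler_sum => v Auv; have o0 := omega_gt0 Auv.
  have := ler_wpM2l (ltW o0) (arc_excess_le Auv).
  have := ler_wpM2l (p_arc_ge0 Auv) (le_trans
    (ler_wpM2l (ltW o0) (node_excess_le u)) (geometric_in_excess Auv)).
  nra.
rewrite big_split /= -mulr_sumr -mulr_suml lerD2l.
by have := ler_wpM2r J0 p_sum_le1; rewrite mul1r.
Qed.

Lemma excess_split : excess <= \sum_u Fnode A X Q u * local_excess u + excess / tau.
Proof.
apply: le_trans (ler_sum _ (fun u _ => vertex_excess_le u)) _.
by rewrite big_split /= -mulr_suml -exchange_arcs.
Qed.

Lemma excess_mul_Dtheta_le u : u \notin X ->
  kappa * (pospart (Fnode A X Q u - Fnode A X P u) * Dtheta u (p u)) <= 2 * (in_wexcess u / tau).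
Proof.
move=> uX; have [p_ge0 p_sum1] := p_QD uX.
set e := pospart (_ - _); have e0 : 0 <= e by exact: pospart_ge0.
apply: le_trans (_ : e * \sum_(v | A u v) omega u v * (theta u v + p u v) <= _).
  rewrite mulrCA; apply: ler_wpM2l => //.
  apply: le_trans (ler_wpM2l (ltW kappa_gt0)
    (Div_theta_le kappa_gt0 omega_gt0 theta_gt0 theta_le1 p_ge0)) _.
  by rewrite mulVKf ?gt_eqF.
apply: le_trans (_ : \sum_(v | A u v) (theta u v + p u v) * (in_wexcess u / tau) <= _).
  rewrite mulr_sumr; apply: ler_sum => v Auv.
  have tp0 : 0 <= theta u v + p u v by apply: addr_ge0; [exact/ltW/theta_gt0 | exact: p_ge0].
  have -> : e * (omega u v * (theta u v + p u v))
            = (theta u v + p u v) * (omega u v * e) by ring.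
  apply: ler_wpM2l => //; apply: le_trans (geometric_in_excess Auv).
  by apply: ler_wpM2l; [exact/ltW/omega_gt0 | exact: node_excess_le].
by rewrite -mulr_suml big_split /= theta_sum1 ?p_sum1.
Qed.

Lemma Psi_bound :
  kappa * \sum_(u | u \notin X) Fnode A X Q u * (Dtheta u (p u) - Dtheta u (q u))
  <= kappa * (Psi A X omega theta kappa Q q - Psi A X omega theta kappa P p)
     + 2 * (excess / tau).
Proof.
have PsiE : Psi A X omega theta kappa Q q - Psi A X omega theta kappa P p =
    \sum_(u | u \notin X) (Fnode A X P u * Dtheta u (p u) - Fnode A X Q u * Dtheta u (q u)).
  by rewrite /Psi opprK addrC -sumrB.
have in_wexcess_ge0 u : 0 <= in_wexcess u.
  by apply: sumr_ge0 => w Awu; apply: mulr_ge0; [exact/ltW/omega_gt0 | exact: pospart_ge0].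
have vertex_le u : u \notin X ->
    kappa * (Fnode A X Q u * (Dtheta u (p u) - Dtheta u (q u))) <=
    kappa * (Fnode A X P u * Dtheta u (p u) - Fnode A X Q u * Dtheta u (q u))
    + 2 * (in_wexcess u / tau).
  move=> uX; have := excess_mul_Dtheta_le uX; have [p_ge0 _] := p_QD uX.
  have Dp0 := Div_ge0 kappa_gt0 omega_gt0 theta_gt0 theta_le1
    (fun v Auv => ltW (theta_gt0 Auv)) p_ge0.
  have := ler_wpM2r (mulr_ge0 (ltW kappa_gt0) Dp0) (le_pospart (Fnode A X Q u - Fnode A X P u)).
  nra.
rewrite PsiE !mulr_sumr; apply: le_trans (ler_sum _ vertex_le) _.
rewrite big_split /= lerD2l -mulr_sumr; apply: ler_wpM2l => //.
rewrite -mulr_suml; apply: ler_wpM2r; first by rewrite invr_ge0 ltW.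
by rewrite exchange_arcs [X in _ <= X](bigID (fun u => u \notin X)) /= lerDl sumr_ge0.
Qed.

Local Notation phi := (potential A r theta).

Lemma arc_cost_le_potential_drop :
  \sum_(u | u \notin X) Fnode A X Q u * \sum_(v | A u v) q u v * (eta u v + 1) * chat v
  <= \sum_(u | u \notin X) (\sum_(v | A u v) Q u v * phi v * chat v
                            - phi u * (Fnode A X Q u * chat u)).
Proof.
apply: ler_sum => u uX; rewrite mulr_sumr.
have flow_le : Fnode A X Q u * chat u <= \sum_(v | A u v) Q u v * chat v.
  under eq_bigr => v Auv do rewrite (Lambda_arcE Q_Lambda Auv) -mulrA.
  rewrite -mulr_sumr; apply: ler_wpM2l; first exact: Lambda_node_ge0 Q_Lambda u.
  exact: chat_le_mean.
apply: le_trans (_ : _ <= \sum_(v | A u v) Q u v * phi v * chat v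
                         - phi u * \sum_(v | A u v) Q u v * chat v) _; last first.
  by rewrite lerD2l lerN2; apply: ler_wpM2l; [exact: potential_ge0 | exact: flow_le].
rewrite mulr_sumr -sumrB; apply: ler_sum => v Auv.
rewrite !mulrA -(Lambda_arcE Q_Lambda Auv).
have := potential_arc A_acyclic r_source theta_gt0 theta_le1 Auv.
have := mulr_ge0 (Lambda_arc_ge0 Q_Lambda Auv) (chat_ge0 v).
nra.
Qed.

(* Summing the potential drop telescopes along the flow [Q]; only the sinks remain. *)
Lemma potential_drop_le :
  \sum_(u | u \notin X) (\sum_(v | A u v) Q u v * phi v * chat v
                         - phi u * (Fnode A X Q u * chat u))
  <= \sum_(x in X) phi x * c x * Fnode A X Q x.
Proof.
rewrite sumrB sum_tails_notin exchange_arcs.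
have inflowE v : \sum_(u | A u v) Q u v * phi v * chat v = phi v * chat v * inflow A Q v.
  by rewrite /inflow mulr_sumr; apply: eq_bigr => u _; ring.
under eq_bigr do rewrite inflowE.
rewrite (bigID (fun v => v \in X)) /=.
have sinksE : \sum_(v in X) phi v * chat v * inflow A Q v
              = \sum_(x in X) phi x * c x * Fnode A X Q x.
  by apply: eq_bigr => x xX; rewrite chat_sinks // /Fnode xX.
have inner_le : \sum_(v | v \notin X) phi v * chat v * inflow A Q v
                <= \sum_(u | u \notin X) phi u * (Fnode A X Q u * chat u).
  apply: ler_sum => v _; rewrite -mulrA [chat v * _]mulrC.
  apply: ler_wpM2l; first exact: potential_ge0.
  apply: ler_wpM2r; first exact: chat_ge0.
  exact: (inflow_le_Lambda_node r_source Q_Lambda).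
lra.
Qed.

Lemma cost_bound :
  \sum_(u | u \notin X) Fnode A X Q u * \sum_(v | A u v) q u v * (eta u v + 1) * chat v
  <= (2 * (Delta0 A r X)%:R + DeltaI A r X theta) * \sum_(x in X) c x * Fnode A X Q x.
Proof.
apply: le_trans arc_cost_le_potential_drop _; apply: le_trans potential_drop_le _.
rewrite mulr_sumr; apply: ler_sum => x xX; rewrite -mulrA; apply: ler_wpM2r.
  exact: (mulr_ge0 (c_ge0 xX) (Lambda_node_ge0 Q_Lambda x)).
exact: (potential_sink r theta_gt0 xX).
Qed.

Lemma local_excess_sum_le :
  \sum_u Fnode A X Q u * local_excess u
  <= kappa * \sum_(u | u \notin X) Fnode A X Q u * (Dtheta u (p u) - Dtheta u (q u))
     + kappa * \sum_(u | u \notin X) Fnode A X Q u *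
                 \sum_(v | A u v) q u v * (eta u v + 1) * chat v.
Proof.
rewrite (bigID (fun u => u \notin X)) /= [X in _ + X]big1 ?addr0; last first.
  move=> u; rewrite negbK => uX; rewrite big_pred0 ?mulr0 // => v.
  by apply/negbTE/negP => /arc_tail_notin; rewrite uX.
rewrite !mulr_sumr -big_split; apply: ler_sum => u uX /=.
have [p_ge0 p_sum1] := p_QD uX; have [q_ge0 q_sum1] := q_QD uX.
have := minimizes_local_bound kappa_gt0 omega_gt0 theta_gt0 theta_le1 p_ge0 q_ge0 p_sum1
  (p_min uX) (fun v _ => chat_ge0 v) q_sum1 (theta_sum1 uX).
move=> /(ler_wpM2l (Lambda_node_ge0 Q_Lambda u)); rewrite mulrDr.
by rewrite mulrCA [X in _ + X]mulrCA.
Qed.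

Lemma step_excess_le :
  (tau - 3) / (kappa * tau) * excess
  <= (2 * (Delta0 A r X)%:R + DeltaI A r X theta) * \sum_(x in X) c x * Fnode A X Q x
     + Psi A X omega theta kappa Q q - Psi A X omega theta kappa P p.
Proof.
rewrite -(ler_pM2l kappa_gt0).
have -> : kappa * ((tau - 3) / (kappa * tau) * excess) = excess - 3 * (excess / tau).
  by field; rewrite !gt_eqF.
have := excess_split; have := local_excess_sum_le; have := Psi_bound.
have := ler_wpM2l (ltW kappa_gt0) cost_bound.
lra.
Qed.

End Step.

Theorem lemma4p13 (R : realType) (V : finType) (A : rel V) (r : V) (X : {set V})
  (omega theta : V -> V -> R) (tau kappa : R)
  (q : V -> V -> R) (c : V -> R) (p Q P : V -> V -> R) :
  is_DAG A r X ->
  is_marked A X omega theta ->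
  is_geometric A tau omega ->
  4 <= tau ->
  0 < kappa ->
  in_QD A X q ->
  (forall x, x \in X -> 0 <= c x) ->
  is_step A X omega theta kappa q c p ->
  is_Lambda A r X q Q ->
  is_Lambda A r X p P ->
  (tau - 3) / (kappa * tau) *
    (\sum_(u : V) \sum_(v | A u v) omega u v * Num.max 0 (Q u v - P u v))
  <= ((2 * (Delta0 A r X)%:R + DeltaI A r X theta) *
        \sum_(x in X) c x * Fnode A X Q x)
     + Psi A X omega theta kappa Q q - Psi A X omega theta kappa P p.
Proof.
move=> [A_acyclic r_source X_sinks] [omega_gt0 _ theta_gt0 theta_sum1] omega_geometric
  tau_ge4 kappa_gt0 q_QD c_ge0 [p_QD [chat [chat_sinks chat_inner p_min]]] Q_Lambda P_Lambda.
have tau_gt0 : 0 < tau by apply: lt_le_trans tau_ge4.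
by apply: (step_excess_le (chat := chat)).
Qed.
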